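(* Let $p$ be a prime, $q=p^r$ with $r$ a power of two, $n\ge1$, let $\mathscr{C}\subseteq\mathrm{GF}(q^2)^n$ be a scalable code and $\mathscr{B}$ a basis of $\mathrm{GF}(q^2)$ over $\mathrm{GF}(q)$. Then for every integer $l$ with $1\le l\le r-1$ or $r+1\le l\le 2r-1$, $\mathrm{Im}_{\mathscr{B}}(\mathscr{C})$ is self-orthogonal w.r.t. $\tilde h_l(x,y)=\sum_{i=1}^{2n}x_iy_i^{p^l}$ on $\mathrm{GF}(q)^{2n}$ if and only if $\mathrm{Tr}(\mathscr{C})$ is self-orthogonal w.r.t. $h_l(x,y)=\sum_{i=1}^n x_iy_i^{p^l}$ on $\mathrm{GF}(q)^n$.
   Context: $\mathrm{Tr}:\mathrm{GF}(q^2)\to\mathrm{GF}(q)$, $\mathrm{Tr}(a)=a+a^q$. The dual basis of a basis $\{\gamma_1,\gamma_2\}$ is the unique basis $\{\beta_1,\beta_2\}$ with $\mathrm{Tr}(\gamma_i\beta_j)=\delta_{ij}$. A code $\mathscr{C}\subseteq\mathrm{GF}(q^2)^n$ is scalable if $x\in\mathscr{C}\Rightarrow\alpha x\in\mathscr{C}$ for all $\alpha\in\mathrm{GF}(q^2)$. For a basis $\mathscr{B}$ with dual basis $\{\beta_1,\beta_2\}$, $\mathrm{Im}_{\mathscr{B}}(\mathscr{C})=\{(\mathrm{Tr}(\beta_1x_1),\ldots,\mathrm{Tr}(\beta_1x_n),\mathrm{Tr}(\beta_2x_1),\ldots,\mathrm{Tr}(\beta_2x_n)):x\in\mathscr{C}\}$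 and $\mathrm{Tr}(\mathscr{C})=\{(\mathrm{Tr}(x_1),\ldots,\mathrm{Tr}(x_n)):x\in\mathscr{C}\}$. A code $D$ is self-orthogonal w.r.t. a form $g$ if $g(x,y)=0$ for all $x,y\in D$. *)

(* GF(q^2) is a finite field L with #|L| = q^2; GF(q) is its
   unique subfield of order q, i.e. the set of a : L with a ^+ q = a. *)
From HB Require Import structures.
From mathcomp Require Import all_boot all_order all_algebra all_field.
Set Implicit Arguments. Unset Strict Implicit. Unset Printing Implicit Defensive.
Import GRing.Theory.
Local Open Scope ring_scope.

Section Defs.
Variable L : finFieldType.

Definition inGFq (q : nat) (a : L) : Prop := a ^+ q = a.

Definition Trq (q : nat) (a : L) : L := a + a ^+ q.

(* {g1, g2} is a basis of L over GF(q) (L has dimension 2 over GF(q)) *)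
Definition is_basis (q : nat) (g1 g2 : L) : Prop :=
  forall a b : L, inGFq q a -> inGFq q b -> a * g1 + b * g2 = 0 -> a = 0 /\ b = 0.

Definition is_dual_basis (q : nat) (g1 g2 b1 b2 : L) : Prop :=
  [/\ Trq q (g1 * b1) = 1, Trq q (g1 * b2) = 0,
      Trq q (g2 * b1) = 0 & Trq q (g2 * b2) = 1].

Definition scalable_code (n : nat) (C : {set 'rV[L]_n}) : Prop :=
  forall x, x \in C -> forall a : L, a *: x \in C.

Definition ImB (q : nat) (b1 b2 : L) (n : nat) (C : {set 'rV[L]_n})
  : {set 'rV[L]_(n + n)} :=
  [set row_mx (map_mx (fun z => Trq q (b1 * z)) x)
              (map_mx (fun z => Trq q (b2 * z)) x) | x in C].

Definition TrC (q : nat) (n : nat) (C : {set 'rV[L]_n}) : {set 'rV[L]_n} :=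
  [set map_mx (Trq q) x | x in C].

Definition hform (m e : nat) (x y : 'rV[L]_m) : L :=
  \sum_(i < m) x 0 i * (y 0 i) ^+ e.

Definition self_orth (m : nat) (f : 'rV[L]_m -> 'rV[L]_m -> L)
  (D : {set 'rV[L]_m}) : Prop :=
  forall x y, x \in D -> y \in D -> f x y = 0.

End Defs.

From HB Require Import structures.
From mathcomp Require Import all_boot all_order all_algebra all_field.
From mathcomp Require Import ring zify.

(* Write q = p^r and s = p^l.  The form on Im_B(C) is the sum of the forms on
   Tr(b1 C) and Tr(b2 C), which gives one direction by scalability.  Conversely,
   the identity Tr(x) Tr(y)^s = Tr(x y^s) + Tr(x y^(qs)) turns the form on
   Im_B(aC) x Im_B(bC) into Tr(a (b^s beta S1 + b^(qs) gamma S2)), where S1 and S2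
   are the forms with exponents s and qs on C itself, beta = b1^(1+s) + b2^(1+s)
   and gamma = b1^(1+qs) + b2^(1+qs).  Nondegeneracy of the trace and the choices
   b = 1 and b = t := b1/b2 (not in GF(q)) give beta S1 = gamma S2 = 0, and then
   Tr(C) is self-orthogonal as soon as beta and gamma do not vanish, i.e. as soon
   as t^(1+p^m) <> -1 for m = l and m = r + l.  But t^(1+p^m) = -1 forces
   t^(p^(2m)) = t, hence t^(p^gcd(2m,2r)) = t; as r is a power of two this yields
   t^q = t unless r divides m, which the range of l excludes. *)

Set Implicit Arguments.
Unset Strict Implicit.
Unset Printing Implicit Defensive.

Import GRing.Theory.
Local Open Scope ring_scope.

Section Frobenius.
Variables (F : fieldType) (p : nat).
Hypothesis pcharF : p \in [pchar F].

Lemma pchar_nat_expn m : [pchar F].-nat (p ^ m)%N.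
Proof. by rewrite pnatX pnatE ?pcharF ?(pcharf_prime pcharF). Qed.

Lemma frobD m (x y : F) : (x + y) ^+ (p ^ m) = x ^+ (p ^ m) + y ^+ (p ^ m).
Proof. exact/exprDn_pchar/pchar_nat_expn. Qed.

Lemma frobN m (x : F) : (- x) ^+ (p ^ m) = - x ^+ (p ^ m).
Proof. exact/exprNn_pchar/pchar_nat_expn. Qed.

Lemma frob_inj m : injective (fun x : F => x ^+ (p ^ m)).
Proof.
move=> x y /= /eqP; rewrite -subr_eq0 -frobN -frobD expf_eq0 subr_eq0.
by case/andP=> _ /eqP.
Qed.

Lemma frob_fixM a c (x : F) : x ^+ (p ^ a) = x -> x ^+ (p ^ (c * a)) = x.
Proof.
move=> xa; elim: c => [|c IHc]; first by rewrite expn0 expr1.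
by rewrite mulSn expnD exprM xa IHc.
Qed.

Lemma frob_fix_gcdn a b (x : F) :
  x ^+ (p ^ a) = x -> x ^+ (p ^ b) = x -> x ^+ (p ^ gcdn a b) = x.
Proof.
move=> xa xb; have [->|a_gt0] := posnP a; first by rewrite gcd0n.
have [u _ /dvdnP[c def_c]] := Bezoutl b a_gt0.
by rewrite -{2}(frob_fixM c xa) -def_c expnD mulnC exprM (frob_fixM u xb).
Qed.

Lemma frob_normN1_fix m (t : F) : t * t ^+ (p ^ m) = -1 -> t ^+ (p ^ (m * 2)) = t.
Proof.
move=> tt; have t_neq0 : t != 0.
  by apply: contra_eq_neq tt => ->; rewrite mul0r eq_sym oppr_eq0 oner_neq0.
have tm : t ^+ (p ^ m) = - t^-1 by apply: (mulfI t_neq0); rewrite tt mulrN divff.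
by rewrite expnM -mulnn exprM tm frobN exprVn tm invrN invrK opprK.
Qed.

Lemma frob_norm_neqN1 k m (t : F) :
  t ^+ (p ^ 2 ^ k.+1) = t -> t ^+ (p ^ 2 ^ k) != t -> ~~ (2 ^ k %| m)%N ->
  t * t ^+ (p ^ m) != -1.
Proof.
move=> t2r tr; apply: contra => /eqP tt.
have := frob_fix_gcdn (frob_normN1_fix tt) t2r; rewrite expnSr -muln_gcdl.
have /dvdn_pfactor[//|i le_ik def_g] := dvdn_gcdr m (2 ^ k).
case: ltngtP le_ik => [lt_ik _|//|eq_ik _] t2g; last first.
  by apply/gcdn_idPr; rewrite def_g eq_ik.
have /dvdnP[c def_r] : (2 ^ i * 2 %| 2 ^ k)%N by rewrite -expnSr dvdn_exp2l.
by rewrite def_r -def_g (frob_fixM c t2g) eqxx in tr.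
Qed.

End Frobenius.

Lemma addr_mul_expr_eq0 (F : fieldType) e (u v : F) : v != 0 ->
  (u * u ^+ e + v * v ^+ e == 0) = (u / v * (u / v) ^+ e == -1).
Proof.
move=> v_neq0; have vv_neq0 : v * v ^+ e != 0 by rewrite mulf_neq0 ?expf_neq0.
rewrite -(divfK v_neq0 u) exprMn -addr_eq0 mulrACA -{2}[v * v ^+ e]mul1r -mulrDl.
by rewrite mulf_eq0 (negbTE vv_neq0) orbF divfK.
Qed.

Lemma vandermonde2_eq0 (F : fieldType) (c1 c2 u w : F) : c1 != c2 ->
  u + w = 0 -> c1 * u + c2 * w = 0 -> u = 0 /\ w = 0.
Proof.
move=> c12 /eqP; rewrite addr_eq0 => /eqP -> /eqP.
rewrite mulrN -mulNr -mulrDl mulf_eq0 addrC subr_eq0 eq_sym (negbTE c12) /=.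
by move=> /eqP ->; rewrite oppr0.
Qed.

Definition imB_row (F : finFieldType) q (b1 b2 : F) n (x : 'rV[F]_n) :
    'rV[F]_(n + n) :=
  row_mx (map_mx (fun z => Trq q (b1 * z)) x) (map_mx (fun z => Trq q (b2 * z)) x).

Lemma hform_imB_row (F : finFieldType) q e (b1 b2 : F) n (x y : 'rV[F]_n) :
  hform e (imB_row q b1 b2 x) (imB_row q b1 b2 y) =
  hform e (map_mx (Trq q) (b1 *: x)) (map_mx (Trq q) (b1 *: y)) +
  hform e (map_mx (Trq q) (b2 *: x)) (map_mx (Trq q) (b2 *: y)).
Proof.
rewrite /hform big_split_ord /=.
by congr (_ + _); apply: eq_bigr => i _; rewrite ?row_mxEl ?row_mxEr !mxE.
Qed.

Section Trace.
Variables (F : finFieldType) (p r : nat).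
Hypotheses (p_prime : prime p) (cardF : #|F| = ((p ^ r) ^ 2)%N).
Local Notation q := (p ^ r)%N.
Local Notation Tr := (Trq q).

Lemma card_pchar : p \in [pchar F].
Proof. by apply: (@card_finPcharP _ _ (r * 2)) => //; rewrite cardF expnM. Qed.

Lemma expf_q2 (x : F) : x ^+ (q * q) = x.
Proof. by rewrite mulnn -cardF expf_card. Qed.

Lemma TrqD (x y : F) : Tr (x + y) = Tr x + Tr y.
Proof. by rewrite /Trq (frobD card_pchar) addrACA. Qed.

Lemma Trq0 : Tr 0 = 0 :> F.
Proof. by rewrite /Trq expr0n eqn0Ngt expn_gt0 prime_gt0 ?addr0. Qed.

Lemma Trq_sum I (s : seq I) (P : pred I) (f : I -> F) :
  Tr (\sum_(i <- s | P i) f i) = \sum_(i <- s | P i) Tr (f i).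
Proof. exact: (big_morph _ TrqD Trq0). Qed.

Lemma TrqZ (c z : F) : c ^+ q = c -> Tr (c * z) = c * Tr z.
Proof. by move=> cq; rewrite /Trq exprMn cq mulrDr. Qed.

Lemma Trq_nondegenerate (e w : F) :
  Tr e != 0 -> (forall a, Tr (a * w) = 0) -> w = 0.
Proof.
move=> Tre_neq0 Trw0; apply: contraNeq Tre_neq0 => w_neq0.
by rewrite -(divfK w_neq0 e) Trw0.
Qed.

Lemma dual_basis_ratio_nfix (g1 g2 b1 b2 : F) : is_dual_basis q g1 g2 b1 b2 ->
  b2 != 0 /\ (b1 / b2) ^+ q != b1 / b2.
Proof.
case=> Tr11 _ Tr21 Tr22.
have b2_neq0 : b2 != 0.
  by apply: contra_eq_neq Tr22 => ->; rewrite mulr0 Trq0 eq_sym oner_neq0.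
split=> //; set t := b1 / b2; have b1E : b1 = t * b2 by rewrite divfK.
apply/eqP=> tq; have t0 : t = 0 by rewrite -Tr21 b1E mulrCA TrqZ // Tr22 mulr1.
by move: Tr11; rewrite b1E t0 mul0r mulr0 Trq0 => /eqP; rewrite eq_sym oner_eq0.
Qed.

Lemma Trq_mul_frob l (x y : F) :
  Tr x * Tr y ^+ (p ^ l) = Tr (x * y ^+ (p ^ l)) + Tr (x * y ^+ (q * p ^ l)).
Proof.
rewrite /Trq (frobD card_pchar) -exprM mulnC !exprMn -!exprM.
by rewrite -mulnA [y ^+ (_ * (q * q))]exprM expf_q2; ring.
Qed.

Lemma hform_Trq_scale l n (a b : F) (x y : 'rV[F]_n) :
  hform (p ^ l) (map_mx Tr (a *: x)) (map_mx Tr (b *: y)) =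
  Tr (a * b ^+ (p ^ l) * hform (p ^ l) x y) +
  Tr (a * b ^+ (q * p ^ l) * hform (q * p ^ l) x y).
Proof.
rewrite /hform !mulr_sumr !Trq_sum -big_split /=; apply: eq_bigr => i _.
by rewrite !mxE Trq_mul_frob !exprMn; congr (Tr _ + Tr _); ring.
Qed.

Lemma hform_Trq_eq0 l n (e b1 b2 : F) (x y : 'rV[F]_n) :
  Tr e != 0 -> b2 != 0 -> (b1 / b2) ^+ q != b1 / b2 ->
  b1 / b2 * (b1 / b2) ^+ (p ^ l) != -1 ->
  b1 / b2 * (b1 / b2) ^+ (q * p ^ l) != -1 ->
  (forall a b,
     hform (p ^ l) (imB_row q b1 b2 (a *: x)) (imB_row q b1 b2 (b *: y)) = 0) ->
  hform (p ^ l) (map_mx Tr x) (map_mx Tr y) = 0.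
Proof.
move=> Tre_neq0 b2_neq0 t_nfix norm_s norm_qs orth.
have lin c :
    c ^+ (p ^ l) *
      ((b1 * b1 ^+ (p ^ l) + b2 * b2 ^+ (p ^ l)) * hform (p ^ l) x y) +
    c ^+ (q * p ^ l) *
      ((b1 * b1 ^+ (q * p ^ l) + b2 * b2 ^+ (q * p ^ l)) * hform (q * p ^ l) x y)
    = 0.
  apply: (Trq_nondegenerate Tre_neq0) => a; rewrite -(orth a c) hform_imB_row.
  by rewrite !scalerA !hform_Trq_scale -!TrqD; congr Tr; rewrite !exprMn; ring.
set t := b1 / b2 in t_nfix norm_s norm_qs lin.
have ts_neq : t ^+ (p ^ l) != t ^+ (q * p ^ l).
  by rewrite exprM eq_sym (inj_eq (frob_inj (m := l) card_pchar)).
have lin1 := lin 1; rewrite !expr1n !mul1r in lin1.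
have [/eqP S1_0 /eqP S2_0] := vandermonde2_eq0 ts_neq lin1 (lin t).
rewrite mulf_eq0 addr_mul_expr_eq0 // (negbTE norm_s) /= in S1_0.
rewrite mulf_eq0 addr_mul_expr_eq0 // (negbTE norm_qs) /= in S2_0.
rewrite -[x]scale1r -[y]scale1r hform_Trq_scale !expr1n !mul1r.
by rewrite (eqP S1_0) (eqP S2_0) Trq0 addr0.
Qed.

End Trace.

Theorem corollary2 (L : finFieldType) (p r k n l : nat) (g1 g2 b1 b2 : L)
  (C : {set 'rV[L]_n}) :
  prime p -> r = (2 ^ k)%N -> #|L| = ((p ^ r) ^ 2)%N -> (0 < n)%N ->
  is_basis (p ^ r) g1 g2 -> is_dual_basis (p ^ r) g1 g2 b1 b2 ->
  scalable_code C ->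
  ((0 < l < r)%N || (r < l < 2 * r)%N) ->
  (self_orth (@hform L (n + n) (p ^ l)) (ImB (p ^ r) b1 b2 C) <->
   self_orth (@hform L n (p ^ l)) (TrC (p ^ r) C)).
Proof.
move=> p_prime -> cardL _ _ dual scalC l_range.
have pcharL := card_pchar p_prime cardL.
have [b2_neq0 t_nfix] := dual_basis_ratio_nfix p_prime dual.
have t2r : (b1 / b2) ^+ (p ^ 2 ^ k.+1) = b1 / b2.
  by rewrite expnSr expnM -mulnn expf_q2.
have r_ndvd_l : ~~ (2 ^ k %| l)%N.
  apply/dvdnP=> -[c def_l]; move: l_range; rewrite def_l.
  by case: c {def_l} => [|[|c]]; nia.
have Tr_g1b1 : Trq (p ^ 2 ^ k) (g1 * b1) != 0.
  by case: dual => -> _ _ _; apply: oner_neq0.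
split=> orth _ _ /imsetP[x xC ->] /imsetP[y yC ->].
- apply: (hform_Trq_eq0 p_prime cardL Tr_g1b1 b2_neq0 t_nfix).
  + exact (frob_norm_neqN1 pcharL t2r t_nfix r_ndvd_l).
  + rewrite -expnD; refine (frob_norm_neqN1 pcharL t2r t_nfix _).
    by rewrite dvdn_addr.
  + by move=> a b; apply: orth; apply: imset_f; apply: scalC.
- by rewrite hform_imB_row !orth ?addr0 //; apply: imset_f; apply: scalC.
Qed.
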